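(* Let $n,k$ be positive integers with $n>2k$, and let $\sigma\in S_n$ be a permutation all of whose cycles have length exceeding $k$. Then the subgroups $S_{n-k}$ and $\langle\sigma\rangle$ invariably generate $S_n$.
   Context: $S_{n-k}$ is viewed as the subgroup of $S_n$ of permutations of $\{1,\dots,n-k\}$ fixing each element of $\{n-k+1,\dots,n\}$. Subgroups $\{H_i\}_{i\in I}$ of a group $H$ invariably generate $H$ if for every choice of elements $\{\sigma_i\}_{i\in I}$ of $H$, the conjugates $\{\sigma_i^{-1}H_i\sigma_i\}_{i\in I}$ generate $H$. *)

From mathcomp Require Import all_boot all_fingroup.
Set Implicit Arguments. Unset Strict Implicit. Unset Printing Implicit Defensive.
Local Open Scope group_scope.

(* S_m viewed inside S_n: permutations of 'I_n fixing every i with m <= i,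
   i.e. permutations of {0,...,m-1} (the paper's {1,...,m}). *)
Definition Sym_sub (n m : nat) : {set 'S_n} :=
  [set s : 'S_n | [forall i : 'I_n, (m <= i)%N ==> (s i == i)]].

Definition invariably_generate2 (gT : finGroupType) (H1 H2 G : {set gT}) :=
  forall x y : gT, x \in G -> y \in G -> << (H1 :^ x) :|: (H2 :^ y) >> = G.

(* every cycle (orbit of <[s]>, fixed points being cycles of length 1)
   of the permutation s has length exceeding k *)
Definition all_cycles_longer (n k : nat) (s : 'S_n) :=
  forall x : 'I_n, (k < #|porbit s x|)%N.

(* The conjugate of S_{n-k} contains every transposition of an (n-k)-set A,
   and A is more than half of {1,...,n}. A conjugate g of a power of sigma
   moves any point p into A, since the cycle of sigma through the
   corresponding point has more than k = n - |A| elements. As A and g^-1(A)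
   must meet in some d, conjugating the transposition (g p, g d) by g^-1 puts
   (p, d) in the generated group; chaining through A then gives every
   transposition, and transpositions generate S_n. *)

From mathcomp Require Import all_boot all_fingroup.
From mathcomp Require Import zify.
Set Implicit Arguments. Unset Strict Implicit.
Local Open Scope group_scope.

Section PermGroupsOfFinType.

Variable T : finType.
Implicit Types (A B : {set T}) (s y : {perm T}) (G : {group {perm T}}).

Lemma setI_neq0_card A B : (#|T| < #|A| + #|B|)%N -> A :&: B != set0.
Proof.
move=> ltTAB; rewrite -card_gt0 -(ltn_add2l #|A :|: B|) addn0 cardsUI.
exact: leq_ltn_trans (max_card _) ltTAB.
Qed.

Lemma porbit_meets s A x :
  (#|~: A| < #|porbit s x|)%N -> exists2 g, g \in <[s]> & g x \in A.
Proof.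
move=> ltCA.
have /set0Pn[_ /setIP[/porbitP[i ->] sixA]] : porbit s x :&: A != set0.
  by apply: setI_neq0_card; rewrite -(cardsC A) [X in (_ < X)%N]addnC ltn_add2l.
by exists (s ^+ i); rewrite ?mem_cycle.
Qed.

Lemma porbitJ_meets s y A p :
  (#|~: A| < #|porbit s (y^-1 p)|)%N -> exists2 g, g \in <[s]> :^ y & g p \in A.
Proof.
rewrite -(card_preimset _ (@perm_inj _ y)) preimsetC => /porbit_meets[g sg].
rewrite inE => gA; exists (g ^ y); first by rewrite memJ_conjg.
by rewrite -{1}(permKV y p) permJ.
Qed.

Lemma mem_tperm_trans G (a b c : T) :
  tperm a b \in G -> tperm b c \in G -> tperm a c \in G.
Proof.
have [<-|neab] := eqVneq a b; first by [].
have [<-|nebc] := eqVneq b c; first by [].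
have [<-|neac] := eqVneq a c; first by rewrite tperm1 group1.
move=> Gab Gbc; rewrite -(tpermJ_tperm nebc neac) [tperm b a]tpermC.
exact: groupJ.
Qed.

Lemma perm_group_full_of_block G A :
  (#|T| < #|A|.*2)%N ->
  {in A &, forall a b, tperm a b \in G} ->
  (forall p, exists2 g, g \in G & g p \in A) ->
  G = [set: {perm T}] :> {set _}.
Proof.
move=> bigA tpermA moveA.
have tperm_to_A p : exists2 d, d \in A & tperm p d \in G.
  have [g Gg gpA] := moveA p.
  have /set0Pn[d] : A :&: g @^-1: A != set0.
    by apply: setI_neq0_card; rewrite card_preimset ?addnn //; apply: perm_inj.
  rewrite !inE => /andP[dA gdA]; exists d => //.
  by have := groupJ (tpermA _ _ gpA gdA) (groupVr Gg); rewrite tpermJ !permK.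
have [a0 a0A] : exists a0, a0 \in A.
  by apply/card_gt0P; move: bigA; rewrite -addnn; lia.
apply/eqP; rewrite eqEsubset subsetT -(gen_tperm a0) gen_subG.
apply/subsetP => _ /imsetP[p _ ->].
have [d dA Gpd] := tperm_to_A p.
by apply: mem_tperm_trans (tpermA _ _ a0A dA) _; rewrite tpermC.
Qed.

End PermGroupsOfFinType.

Lemma card_ord_lt (n m : nat) : (m <= n)%N -> #|[set i : 'I_n | (i < m)%N]| = m.
Proof.
move=> lemn.
have -> : [set i : 'I_n | (i < m)%N] = [set widen_ord lemn i | i : 'I_m].
  apply/setP => i; rewrite inE; apply/idP/imsetP => [ltim | [j _ ->] /=].
    by exists (Ordinal ltim) => //; apply: val_inj.
  exact: ltn_ord.
by rewrite card_imset ?card_ord // => i j /(congr1 val) eqij; apply: val_inj.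
Qed.

Lemma tperm_Sym_sub (n m : nat) (i j : 'I_n) :
  (i < m)%N -> (j < m)%N -> tperm i j \in Sym_sub n m.
Proof.
move=> ltim ltjm; rewrite inE; apply/forall_inP => l lelm.
by rewrite tpermD //; apply: contraTneq lelm => <-; rewrite -ltnNge.
Qed.

Theorem proposition3p5 (n k : nat) (s : 'S_n) :
  (0 < n)%N -> (0 < k)%N -> (2 * k < n)%N ->
  all_cycles_longer k s ->
  invariably_generate2 (Sym_sub n (n - k)) <[s]> [set: 'S_n].
Proof.
move=> _ _ ltkn long_s x y _ _.
pose A := x^-1 @^-1: [set i : 'I_n | (i < n - k)%N].
have cardA : #|A| = (n - k)%N.
  by rewrite card_preimset ?card_ord_lt ?leq_subr //; apply: perm_inj.
have cardCA : #|~: A| = k.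
  by have := cardsC A; rewrite cardA card_ord; lia.
apply: (@perm_group_full_of_block _ _ A).
- by rewrite card_ord cardA; lia.
- move=> a b; rewrite !inE => ltan ltbn.
  rewrite -[a](permKV x) -[b](permKV x) -tpermJ.
  by apply: mem_gen; rewrite inE memJ_conjg tperm_Sym_sub.
- move=> p; have := long_s (y^-1 p).
  rewrite -cardCA => /porbitJ_meets[g sg gpA].
  by exists g => //; apply: mem_gen; rewrite inE sg orbT.
Qed.
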